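(* Consider the two-period setting of the context. (i) Assume that for all $n\in\mathcal N$, $\frac{\hat\ell_n^P}{E_n}+\frac12\ge\frac{\hat\ell^P}{E}$. Then for every $\alpha\in(0,1]$ the unique Nash equilibrium of $\mathcal G^{\mathrm{DP}}_\alpha$ is given by $$\ell_n^P=\hat\ell_n^P+\frac{E_n}{E}\frac{1-\alpha}{2}(\hat\ell^O-\hat\ell^P),\qquad \ell_n^O=\hat\ell_n^O+\frac{E_n}{E}\frac{1-\alpha}{2}(\hat\ell^P-\hat\ell^O),$$ and for $\alpha=0$ every feasible profile whose aggregate peak load satisfies $\ell^P=\frac E2$ is a Nash equilibrium of $\mathcal G^{\mathrm{DP}}_0$. (ii) Assume that for all $n\in\mathcal N$, $2(N-1)\hat\ell_n^P\ge(\hat\ell^P-\hat\ell^O)-E_n$. Then for every $\alpha\in[0,1]$ the unique Nash equilibrium of $\mathcal G^{\mathrm{HP}}_\alpha$ is given by $$\ell_n^P=\hat\ell_n^P+\frac{1-\alpha}{2(1+\alpha)}\Big(\phi(\alpha)(\hat\ell^O-\hat\ell^P)+(\hat\ell_n^O-\hat\ell_n^P)\Big),\qquad \ell_n^O=\hat\ell_n^O+\frac{1-\alpha}{2(1+\alpha)}\Big(\phi(\alpha)(\hat\ell^P-\hat\ell^O)+(\hat\ell_n^P-\hat\ell_n^O)\Big),$$ where $\phi(\alpha)=\frac{2\alpha}{(1+\alpha)+(1-\alpha)N}\in[0,1]$.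
   Context: Two-period setting: users $\mathcal N=\{1,\dots,N\}$, periods $\mathcal H=\{P,O\}$ (peak and off-peak). Each user $n$ has energy demand $E_n>0$ and preferred profile $(\hat\ell_n^P,\hat\ell_n^O)$ with $\hat\ell_n^h\ge0$ and $\hat\ell_n^P+\hat\ell_n^O=E_n$; write $E=\sum_nE_n$, $\hat\ell^h=\sum_n\hat\ell_n^h$, and assume $\hat\ell^P\ge\frac E2\ge\hat\ell^O$. User $n$'s feasible set is $\mathcal L_n=\{(\ell_n^P,\ell_n^O):\ell_n^P+\ell_n^O=E_n,\ \ell_n^P\ge0,\ \ell_n^O\ge0\}$; $\ell^h=\sum_n\ell_n^h$. Costs are $C_h(x)=x^2$ for $h\in\{P,O\}$, utilities $u_n(\boldsymbol\ell_n)=-\sum_{h}(\ell_n^h-\hat\ell_n^h)^2$. DP bill: $b_n^{\mathrm{DP}}=\frac{E_n}{E}\big((\ell^P)^2+(\ell^O)^2\big)$; HP bill: $b_n^{\mathrm{HP}}=\sum_h\frac{\ell_n^h}{\ell^h}(\ell^h)^2=\sum_h\ell_n^h\ell^h$. In $\mathcal G^{\mathrm{DP}}_\alpha$ (resp. $\mathcal G^{\mathrm{HP}}_\alpha$), $\alpha\in[0,1]$, user $n$ minimizes $f_n^\alpha=(1-\alpha)b_n-\alpha u_n(\boldsymbol\ell_n)$ over $\mathcal L_n$ with $b_n=b_n^{\mathrm{DP}}$ (resp. $b_n^{\mathrm{HP}}$), given the others' profiles. A Nash equilibrium is a profile in $\prod_n\mathcal L_n$ from which no user can lower $f_n^\alpha$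 by a unilateral feasible deviation. *)

From HB Require Import structures.
From mathcomp Require Import all_boot all_order all_algebra.
Set Implicit Arguments. Unset Strict Implicit. Unset Printing Implicit Defensive.
Import Order.TTheory GRing.Theory Num.Theory.
Local Open Scope ring_scope.

Section Game.
Variables (R : realFieldType) (N : nat).

Definition tot (l : 'I_N -> R) : R := \sum_(n < N) l n.

Definition feas_n (E : 'I_N -> R) (n : 'I_N) (x y : R) : Prop :=
  x + y = E n /\ 0 <= x /\ 0 <= y.

Definition feasible (E : 'I_N -> R) (lP lO : 'I_N -> R) : Prop :=
  forall n, feas_n E n (lP n) (lO n).

Definition util (hP hO : 'I_N -> R) (lP lO : 'I_N -> R) (n : 'I_N) : R :=
  - ((lP n - hP n) ^+ 2 + (lO n - hO n) ^+ 2).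

Definition bill_DP (E : 'I_N -> R) (lP lO : 'I_N -> R) (n : 'I_N) : R :=
  E n / tot E * ((tot lP) ^+ 2 + (tot lO) ^+ 2).

Definition bill_HP (lP lO : 'I_N -> R) (n : 'I_N) : R :=
  lP n * tot lP + lO n * tot lO.

Definition cost (bill : ('I_N -> R) -> ('I_N -> R) -> 'I_N -> R)
  (hP hO : 'I_N -> R) (alpha : R) (lP lO : 'I_N -> R) (n : 'I_N) : R :=
  (1 - alpha) * bill lP lO n - alpha * util hP hO lP lO n.

Definition upd (l : 'I_N -> R) (n : 'I_N) (x : R) : 'I_N -> R :=
  fun m => if m == n then x else l m.

Definition nash (bill : ('I_N -> R) -> ('I_N -> R) -> 'I_N -> R)
  (E hP hO : 'I_N -> R) (alpha : R) (lP lO : 'I_N -> R) : Prop :=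
  feasible E lP lO /\
  forall (n : 'I_N) (x y : R), feas_n E n x y ->
    cost bill hP hO alpha lP lO n <=
    cost bill hP hO alpha (upd lP n x) (upd lO n y) n.

Definition nash_DP (E hP hO : 'I_N -> R) (alpha : R) :=
  nash (bill_DP E) E hP hO alpha.

Definition nash_HP (E hP hO : 'I_N -> R) (alpha : R) :=
  nash bill_HP E hP hO alpha.

Definition phi (alpha : R) : R :=
  2 * alpha / ((1 + alpha) + (1 - alpha) * N%:R).

End Game.

From mathcomp Require Import all_boot all_order all_algebra.
From mathcomp Require Import ring lra.
Set Implicit Arguments. Unset Strict Implicit. Unset Printing Implicit Defensive.
Import Order.TTheory GRing.Theory Num.Theory.
Local Open Scope ring_scope.

(* Once the other users are fixed, the cost of user n is a quadratic function
   of its own peak load t in [0, E_n] (off-peak load E_n - t), with slope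
   g_n(l) at the current profile l.  Hence l is a Nash equilibrium iff it is
   feasible and (t - l_n) g_n(l) >= 0 for every n and t in [0, E_n].  The
   announced profiles are feasible (this is where the hypotheses on the
   preferred profiles enter) and make every slope vanish, so they are
   equilibria.  In both games g_n is affine in l_n and in the aggregate peak
   load, with positive coefficients up to a positive weight, so l |-> g(l) is
   a strict P-function: a second equilibrium l would satisfy
   (l_n - x_n) (g_n(l) - g_n(x)) <= 0 for all n, which forces l = x.  For
   alpha = 0 the DP slope is proportional to 2 l^P - E, which vanishes as soon
   as l^P = E/2. *)

Lemma linear_coef_ge0 (R : realFieldType) (p q : R) :
  (forall k, 0 < k <= 1 -> 0 <= k * p + k ^+ 2 * q) -> 0 <= p.
Proof.
move=> step_ge0; rewrite leNgt; apply/negP => p_lt0.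
have q_le : q <= `|q| := ler_norm q.
have d_gt0 : 0 < `|q| - p by have := normr_ge0 q; lra.
set k := - p / (`|q| - p).
have k_gt0 : 0 < k by rewrite divr_gt0 // oppr_gt0.
have k_le1 : k <= 1 by rewrite ler_pdivrMr // mul1r; have := normr_ge0 q; lra.
have := step_ge0 k; rewrite k_gt0 k_le1 => /(_ isT).
have -> : k * p + k ^+ 2 * q = - (k * (p ^+ 2 / (`|q| - p))) - k ^+ 2 * (`|q| - q).
  by rewrite /k; field; exact: lt0r_neq0.
have : 0 < k * (p ^+ 2 / (`|q| - p)).
  by rewrite mulr_gt0 // divr_gt0 // exprn_even_gt0 // ltr0_neq0 // orbT.
have : 0 <= k ^+ 2 * (`|q| - q) by rewrite mulr_ge0 ?sqr_ge0 // subr_ge0.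
lra.
Qed.

Section Totals.
Variables (R : realFieldType) (N : nat).
Implicit Types (l m E lP lO : 'I_N -> R).

Lemma eq_tot l m : l =1 m -> tot l = tot m.
Proof. by move=> lm; apply: eq_bigr => n _. Qed.

Lemma totD l m : tot (fun n => l n + m n) = tot l + tot m.
Proof. exact: big_split. Qed.

Lemma totB l m : tot (fun n => l n - m n) = tot l - tot m.
Proof. exact: sumrB. Qed.

Lemma totZ c l : tot (fun n => c * l n) = c * tot l.
Proof. by rewrite /tot mulr_sumr. Qed.

Lemma tot_const (c : R) : tot (fun _ : 'I_N => c) = N%:R * c.
Proof. by rewrite /tot sumr_const card_ord mulr_natl. Qed.

Lemma tot_upd l n x : tot (upd l n x) = tot l - l n + x.
Proof.
rewrite /tot (bigD1 n) //= [in RHS](bigD1 n) //= /upd eqxx.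
under eq_bigr => i /negbTE -> do [].
ring.
Qed.

Lemma le_tot E n : (forall i, 0 < E i) -> E n <= tot E.
Proof.
move=> E_gt0; rewrite /tot (bigD1 n) //= lerDl sumr_ge0 // => i _.
exact: ltW.
Qed.

Lemma totD_eq l m E : (forall n, l n + m n = E n) -> tot l + tot m = tot E.
Proof. by move=> lmE; rewrite -totD; apply: eq_tot. Qed.

Lemma feasible_tot E lP lO : feasible E lP lO -> tot lO = tot E - tot lP.
Proof.
move=> feas; rewrite -(@totD_eq lP lO E) => [|n]; first ring.
by case: (feas n).
Qed.

End Totals.

(* The map [l |-> (g n (l n) (tot l))_n] is a strict P-function in the sense
   of More and Rheinboldt. *)
Definition strict_P (R : realFieldType) (N : nat) (g : 'I_N -> R -> R -> R) :=
  forall lP mP : 'I_N -> R,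
    (forall n, (lP n - mP n) * (g n (lP n) (tot lP) - g n (mP n) (tot mP)) <= 0) ->
    forall n, lP n = mP n.

Lemma affine_strict_P (R : realFieldType) (N : nat) (g : 'I_N -> R -> R -> R)
    (b : R) (rho c d : 'I_N -> R) :
  0 <= b -> (forall n, 0 < rho n) -> (forall n, 0 < c n) ->
  (forall n x T, g n x T = rho n * (b * T + c n * x) + d n) -> strict_P g.
Proof.
move=> b_ge0 rho_gt0 c_gt0 gE lP mP mono.
(* Divide the n-th product by rho_n and sum: b (tot u)^2 + sum c_n u_n^2 <= 0. *)
pose u n := lP n - mP n.
have u_le0 n : u n * (b * tot u) + c n * u n ^+ 2 <= 0.
  rewrite -(pmulr_rle0 _ (rho_gt0 n)).
  by have := mono n; rewrite !gE /u totB; congr (_ <= _); ring.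
have : b * tot u ^+ 2 + \sum_n c n * u n ^+ 2 <= 0.
  have := sumr_le0 (index_enum _) (fun n (_ : true) => u_le0 n).
  by rewrite big_split /= -mulr_suml -/(tot u) mulrCA -expr2.
have cu_ge0 n : 0 <= c n * u n ^+ 2 by rewrite mulr_ge0 ?sqr_ge0 ?ltW.
have bU_ge0 : 0 <= b * tot u ^+ 2 by rewrite mulr_ge0 ?sqr_ge0.
have cu_sum_ge0 : 0 <= \sum_n c n * u n ^+ 2 by rewrite sumr_ge0.
move=> sum_le0; have sum0 : \sum_n c n * u n ^+ 2 = 0 by lra.
move=> n; have /eqP := @psumr_eq0P _ _ _ _ (fun m _ => cu_ge0 m) sum0 n isT.
by rewrite mulf_eq0 (negbTE (lt0r_neq0 (c_gt0 n))) sqrf_eq0 subr_eq0 => /eqP.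
Qed.

Section QuadraticDeviation.
Variables (R : realFieldType) (N : nat).
Variables (bill : ('I_N -> R) -> ('I_N -> R) -> 'I_N -> R) (E hP hO : 'I_N -> R).
Variables (alpha : R) (g : 'I_N -> R -> R -> R) (q : 'I_N -> R).

Hypothesis cost_deviation : forall lP lO n t, feasible E lP lO ->
  cost bill hP hO alpha (upd lP n t) (upd lO n (E n - t)) n
    - cost bill hP hO alpha lP lO n
  = (t - lP n) * g n (lP n) (tot lP) + q n * (t - lP n) ^+ 2.

Lemma nash_of_stationary lP lO :
  (forall n, 0 <= q n) -> feasible E lP lO ->
  (forall n, g n (lP n) (tot lP) = 0) -> nash bill E hP hO alpha lP lO.
Proof.
move=> q_ge0 feas stat; split=> // n x y [xy _].
have -> : y = E n - x by rewrite -xy addrC addKr.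
by rewrite -subr_ge0 cost_deviation // stat mulr0 add0r mulr_ge0 ?sqr_ge0.
Qed.

Lemma nash_first_order lP lO n t :
  nash bill E hP hO alpha lP lO -> 0 <= t <= E n ->
  0 <= (t - lP n) * g n (lP n) (tot lP).
Proof.
move=> [feas opt] /andP[t_ge0 t_le].
have [lPO [lP_ge0 lO_ge0]] := feas n.
apply: (@linear_coef_ge0 _ _ (q n * (t - lP n) ^+ 2)) => k /andP[k_gt0 k_le1].
pose s := lP n + k * (t - lP n).
have s_feas : feas_n E n s (E n - s).
  split; first by rewrite addrC subrK.
  by split; rewrite /s; nra.
have := opt n s (E n - s) s_feas.
rewrite -subr_ge0 cost_deviation //.
by have -> : (s - lP n) * g n (lP n) (tot lP) + q n * (s - lP n) ^+ 2
  = k * ((t - lP n) * g n (lP n) (tot lP)) + k ^+ 2 * (q n * (t - lP n) ^+ 2)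
  by rewrite /s; ring.
Qed.

Lemma nash_iff_stationary xP xO :
  (forall n, 0 <= q n) -> strict_P g -> feasible E xP xO ->
  (forall n, g n (xP n) (tot xP) = 0) ->
  forall lP lO, nash bill E hP hO alpha lP lO <-> (forall n, lP n = xP n /\ lO n = xO n).
Proof.
move=> q_ge0 g_strict xfeas xstat lP lO; split=> [ne | lx].
- have lPx : forall n, lP n = xP n.
    apply: g_strict => n; rewrite xstat subr0.
    have [xPO [xP_ge0 xO_ge0]] := xfeas n.
    have := nash_first_order ne (_ : 0 <= xP n <= E n).
    by rewrite -opprB mulNr oppr_ge0; apply; lra.
  move=> n; split=> //.
  by have [[lPO _] [xPO _]] := (ne.1 n, xfeas n); have := lPx n; lra.
- have tot_lx : tot lP = tot xP by apply: eq_tot => n; case: (lx n).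
  apply: nash_of_stationary => // n; first by case: (lx n) => -> ->.
  by rewrite tot_lx (lx n).1.
Qed.

End QuadraticDeviation.

Section DemandProportional.
Variables (R : realFieldType) (N : nat) (E hP hO : 'I_N -> R).
Hypotheses (E_gt0 : forall n, 0 < E n) (hsum : forall n, hP n + hO n = E n).

Definition grad_DP (a : R) (n : 'I_N) (x T : R) : R :=
  2 * (1 - a) * (E n / tot E) * (2 * T - tot E) + 4 * a * (x - hP n).

Definition dp_peak (a : R) (n : 'I_N) : R :=
  hP n + E n / tot E * ((1 - a) / 2) * (tot hO - tot hP).

Definition dp_offpeak (a : R) (n : 'I_N) : R :=
  hO n + E n / tot E * ((1 - a) / 2) * (tot hP - tot hO).

Lemma tot_E_gt0 (n : 'I_N) : 0 < tot E.
Proof. exact: lt_le_trans (E_gt0 n) (le_tot n E_gt0). Qed.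

Lemma share_ge0 n : 0 <= E n / tot E.
Proof. by rewrite divr_ge0 ?ltW ?(tot_E_gt0 n). Qed.

Lemma cost_DP_deviation a lP lO n t : feasible E lP lO ->
  cost (bill_DP E) hP hO a (upd lP n t) (upd lO n (E n - t)) n
    - cost (bill_DP E) hP hO a lP lO n
  = (t - lP n) * grad_DP a n (lP n) (tot lP)
    + (2 * (1 - a) * (E n / tot E) + 2 * a) * (t - lP n) ^+ 2.
Proof.
move=> feas; have [lPO _] := feas n.
rewrite /cost /bill_DP /util /grad_DP !tot_upd /upd eqxx (feasible_tot feas).
have -> : lO n = E n - lP n by rewrite -lPO addrC addKr.
have -> : hO n = E n - hP n by rewrite -(hsum n) addrC addKr.
ring.
Qed.

Lemma grad_DP_strict_P a : 0 < a <= 1 -> strict_P (grad_DP a).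
Proof.
move=> /andP[a_gt0 a_le1].
apply: (@affine_strict_P _ _ _ (4 * (1 - a) / tot E) E (fun n => 4 * a / E n)
          (fun n => - 2 * (1 - a) * (E n / tot E) * tot E - 4 * a * hP n)) => //.
- by rewrite divr_ge0 ?mulr_ge0 ?subr_ge0 // sumr_ge0 // => n _; exact: ltW.
- by move=> n; rewrite divr_gt0 ?mulr_gt0.
- move=> n x T; rewrite /grad_DP; field.
  by rewrite !lt0r_neq0 ?(tot_E_gt0 n).
Qed.

Lemma dp_feasible a :
  0 <= a <= 1 -> (forall n, 0 <= hP n) -> (forall n, 0 <= hO n) ->
  tot hO <= tot hP -> (forall n, tot hP / tot E <= hP n / E n + 1 / 2) ->
  feasible E (dp_peak a) (dp_offpeak a).
Proof.
move=> /andP[a_ge0 a_le1] hP_ge0 hO_ge0 hO_le_hP cond; rewrite /feasible => n.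
have TE_gt0 := tot_E_gt0 n; have En_gt0 := E_gt0 n.
have tot_hPO := totD_eq hsum.
set X := E n / tot E * (tot hP - tot hO).
have X_ge0 : 0 <= X by rewrite mulr_ge0 ?divr_ge0 ?subr_ge0 // ltW.
have X_le : X <= 2 * hP n.
  have : E n * (tot hP / tot E) <= E n * (hP n / E n + 1 / 2).
    by rewrite ler_wpM2l // ltW.
  have -> : E n * (hP n / E n + 1 / 2) = hP n + E n / 2 by field; exact: lt0r_neq0.
  have -> : X = 2 * (E n * (tot hP / tot E)) - E n.
    by rewrite /X -tot_hPO; field; rewrite tot_hPO lt0r_neq0.
  lra.
split; first by rewrite /dp_peak /dp_offpeak -hsum; ring.
split.
- have -> : dp_peak a n = hP n - (1 - a) / 2 * X by rewrite /dp_peak /X; ring.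
  nra.
- have -> : dp_offpeak a n = hO n + (1 - a) / 2 * X by rewrite /dp_offpeak /X; ring.
  by apply: addr_ge0 => //; rewrite mulr_ge0 // divr_ge0 // subr_ge0.
Qed.

Lemma dp_stationary a n : grad_DP a n (dp_peak a n) (tot (dp_peak a)) = 0.
Proof.
have TE_gt0 := tot_E_gt0 n; have tot_hPO := totD_eq hsum.
have tot_peak : tot (dp_peak a) = tot hP + (1 - a) / 2 * (tot hO - tot hP).
  rewrite -[X in _ = _ + X](divfK (lt0r_neq0 TE_gt0)) -totZ -totD.
  by apply: eq_tot => m; rewrite /dp_peak; ring.
by rewrite /grad_DP tot_peak /dp_peak -tot_hPO; field; rewrite tot_hPO lt0r_neq0.
Qed.

Lemma nash_DP_iff a :
  0 < a <= 1 -> (forall n, 0 <= hP n) -> (forall n, 0 <= hO n) ->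
  tot hO <= tot hP -> (forall n, tot hP / tot E <= hP n / E n + 1 / 2) ->
  forall lP lO, nash_DP E hP hO a lP lO <->
    (forall n, lP n = dp_peak a n /\ lO n = dp_offpeak a n).
Proof.
move=> a_range hP_ge0 hO_ge0 hO_le_hP cond.
have /andP[a_gt0 a_le1] := a_range.
apply: (nash_iff_stationary (@cost_DP_deviation a)).
- move=> n; have := share_ge0 n; nra.
- exact: grad_DP_strict_P.
- by apply: dp_feasible; rewrite // ltW.
- exact: dp_stationary.
Qed.

Lemma nash_DP0_balanced lP lO :
  feasible E lP lO -> tot lP = tot E / 2 -> nash_DP E hP hO 0 lP lO.
Proof.
move=> feas lP_half; apply: (nash_of_stationary (@cost_DP_deviation 0)) => // n.
  by have := share_ge0 n; lra.
rewrite /grad_DP lP_half.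
have -> : 2 * (tot E / 2) - tot E = 0 by field.
ring.
Qed.

End DemandProportional.

Section HourlyProportional.
Variables (R : realFieldType) (N : nat) (E hP hO : 'I_N -> R).
Hypothesis hsum : forall n, hP n + hO n = E n.

Definition grad_HP (a : R) (n : 'I_N) (x T : R) : R :=
  (1 - a) * (2 * T - tot E + 2 * x - E n) + 4 * a * (x - hP n).

Definition hp_peak (a : R) (n : 'I_N) : R :=
  hP n + (1 - a) / (2 * (1 + a)) * (phi N a * (tot hO - tot hP) + (hO n - hP n)).

Definition hp_offpeak (a : R) (n : 'I_N) : R :=
  hO n + (1 - a) / (2 * (1 + a)) * (phi N a * (tot hP - tot hO) + (hP n - hO n)).

Lemma cost_HP_deviation a lP lO n t : feasible E lP lO ->
  cost (@bill_HP R N) hP hO a (upd lP n t) (upd lO n (E n - t)) n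
    - cost (@bill_HP R N) hP hO a lP lO n
  = (t - lP n) * grad_HP a n (lP n) (tot lP) + 2 * (t - lP n) ^+ 2.
Proof.
move=> feas; have [lPO _] := feas n.
rewrite /cost /bill_HP /util /grad_HP !tot_upd /upd eqxx (feasible_tot feas).
have -> : lO n = E n - lP n by rewrite -lPO addrC addKr.
have -> : hO n = E n - hP n by rewrite -(hsum n) addrC addKr.
ring.
Qed.

Lemma grad_HP_strict_P a : 0 <= a <= 1 -> strict_P (grad_HP a).
Proof.
move=> /andP[a_ge0 a_le1].
apply: (@affine_strict_P _ _ _ (2 * (1 - a)) (fun=> 1) (fun=> 2 * (1 + a))
          (fun n => - (1 - a) * (tot E + E n) - 4 * a * hP n)) => //.
- by rewrite mulr_ge0 ?subr_ge0.
- by move=> n; rewrite mulr_gt0 ?ltr_pwDl.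
- by move=> n x T; rewrite /grad_HP; ring.
Qed.

Lemma phi_den_gt0 (a : R) : 0 <= a <= 1 -> 0 < 1 + a + (1 - a) * N%:R.
Proof.
case/andP=> a_ge0 a_le1; have : 0 <= (1 - a) * N%:R by rewrite mulr_ge0 ?subr_ge0.
lra.
Qed.

Lemma phi_ge0_le1 (a : R) : 0 <= a <= 1 -> 0 <= phi N a <= 1.
Proof.
move=> a_range; have K_gt0 := phi_den_gt0 a_range; case/andP: a_range => a_ge0 a_le1.
rewrite /phi; apply/andP; split; first by rewrite divr_ge0 ?mulr_ge0 // ltW.
rewrite ler_pdivrMr // mul1r.
have : 0 <= (1 - a) * N%:R by rewrite mulr_ge0 ?subr_ge0.
lra.
Qed.

Lemma hp_weight_bound (a : R) : 0 <= a <= 1 ->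
  (1 - a) / (2 * (1 + a)) * phi N a * (2 * N%:R - 1) <= 1 - (1 - a) / (2 * (1 + a)).
Proof.
move=> a_range; have K_gt0 := phi_den_gt0 a_range; case/andP: a_range => a_ge0 a_le1.
rewrite -subr_ge0.
have -> : 1 - (1 - a) / (2 * (1 + a)) - (1 - a) / (2 * (1 + a)) * phi N a * (2 * N%:R - 1)
  = ((1 + a) * (1 + 3 * a) + 2 * a * (1 - a) + (1 - a) ^+ 2 * N%:R)
    / (2 * (1 + a) * (1 + a + (1 - a) * N%:R)).
  have a1_neq0 : 1 + a != 0 by apply: lt0r_neq0; lra.
  by rewrite /phi; field; rewrite a1_neq0 lt0r_neq0.
have : 0 <= (1 - a) ^+ 2 * N%:R by rewrite mulr_ge0 ?sqr_ge0.
move=> ?; apply: divr_ge0; first nra.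
by rewrite ltW // !mulr_gt0 //; lra.
Qed.

Lemma hp_feasible a :
  0 <= a <= 1 -> (forall n, 0 <= hP n) -> (forall n, 0 <= hO n) ->
  tot hO <= tot hP -> (forall n, (tot hP - tot hO) - E n <= 2 * (N%:R - 1) * hP n) ->
  feasible E (hp_peak a) (hp_offpeak a).
Proof.
move=> a_range hP_ge0 hO_ge0 hO_le_hP cond; rewrite /feasible => n.
have /andP[ph_ge0 ph_le1] := phi_ge0_le1 a_range.
have bound := hp_weight_bound a_range.
case/andP: a_range => a_ge0 a_le1.
set c : R := (1 - a) / (2 * (1 + a)) in bound *.
set ph : R := phi N a in ph_ge0 ph_le1 bound *.
set D : R := tot hP - tot hO.
have c_ge0 : 0 <= c by rewrite divr_ge0 ?mulr_ge0 ?subr_ge0 //; lra.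
have c_le1 : c <= 1 by rewrite ler_pdivrMr ?mul1r; lra.
have D_ge0 : 0 <= D by rewrite subr_ge0.
have [hPn_ge0 hOn_ge0] := (hP_ge0 n, hO_ge0 n).
split; first by rewrite /hp_peak /hp_offpeak -hsum; ring.
split.
- have -> : hp_peak a n = (1 - c) * hP n + c * hO n - c * ph * D.
    by rewrite /hp_peak -/c -/ph /D; ring.
  have D_le : D <= (2 * N%:R - 1) * hP n + hO n by have := cond n; rewrite -/D -hsum; lra.
  have : c * ph * D <= c * ph * ((2 * N%:R - 1) * hP n + hO n).
    by have := ler_wpM2l (mulr_ge0 c_ge0 ph_ge0) D_le.
  have : c * ph * (2 * N%:R - 1) * hP n <= (1 - c) * hP n by exact: ler_wpM2r.
  have : c * ph * hO n <= c * hO n by exact: ler_wpM2r (ler_piMr c_ge0 ph_le1).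
  lra.
- have -> : hp_offpeak a n = (1 - c) * hO n + c * hP n + c * ph * D.
    by rewrite /hp_offpeak -/c -/ph /D; ring.
  by have := mulr_ge0 (mulr_ge0 c_ge0 ph_ge0) D_ge0; nra.
Qed.

Lemma hp_stationary a n : 0 <= a <= 1 ->
  grad_HP a n (hp_peak a n) (tot (hp_peak a)) = 0.
Proof.
move=> a_range; have K_neq0 := lt0r_neq0 (phi_den_gt0 a_range).
have a1_neq0 : 1 + a != 0 by apply: lt0r_neq0; case/andP: a_range; lra.
have tot_hPO := totD_eq hsum.
have tot_peak : tot (hp_peak a) = tot hP + (1 - a) / (2 * (1 + a)) *
    (N%:R * (phi N a * (tot hO - tot hP)) + (tot hO - tot hP)).
  by rewrite /hp_peak totD totZ totD tot_const totB.
rewrite /grad_HP tot_peak /hp_peak /phi -tot_hPO -(hsum n).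
by field; rewrite a1_neq0 K_neq0.
Qed.

Lemma nash_HP_iff a :
  0 <= a <= 1 -> (forall n, 0 <= hP n) -> (forall n, 0 <= hO n) ->
  tot hO <= tot hP -> (forall n, (tot hP - tot hO) - E n <= 2 * (N%:R - 1) * hP n) ->
  forall lP lO, nash_HP E hP hO a lP lO <->
    (forall n, lP n = hp_peak a n /\ lO n = hp_offpeak a n).
Proof.
move=> a_range hP_ge0 hO_ge0 hO_le_hP cond.
apply: (nash_iff_stationary (@cost_HP_deviation a)) => //.
- exact: grad_HP_strict_P.
- exact: hp_feasible.
- by move=> n; exact: hp_stationary.
Qed.

End HourlyProportional.

Theorem theorem3 (R : realFieldType) (N : nat) (E hP hO : 'I_N -> R)
  (hE : forall n, 0 < E n)
  (hPpos : forall n, 0 <= hP n) (hOpos : forall n, 0 <= hO n)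
  (hsum : forall n, hP n + hO n = E n)
  (hpeak1 : tot E / 2 <= tot hP) (hpeak2 : tot hO <= tot E / 2) :
  ((forall n, tot hP / tot E <= hP n / E n + 1 / 2) ->
     (forall alpha : R, 0 < alpha <= 1 ->
        forall lP lO : 'I_N -> R,
          nash_DP E hP hO alpha lP lO <->
          (forall n,
             lP n = hP n + E n / tot E * ((1 - alpha) / 2) * (tot hO - tot hP) /\
             lO n = hO n + E n / tot E * ((1 - alpha) / 2) * (tot hP - tot hO)))
     /\
     (forall lP lO : 'I_N -> R,
        feasible E lP lO -> tot lP = tot E / 2 -> nash_DP E hP hO 0 lP lO))
  /\
  ((forall n, (tot hP - tot hO) - E n <= 2 * (N%:R - 1) * hP n) ->
     forall alpha : R, 0 <= alpha <= 1 ->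
       (0 <= phi N alpha <= 1) /\
       (forall lP lO : 'I_N -> R,
          nash_HP E hP hO alpha lP lO <->
          (forall n,
             lP n = hP n + (1 - alpha) / (2 * (1 + alpha)) *
                      (phi N alpha * (tot hO - tot hP) + (hO n - hP n)) /\
             lO n = hO n + (1 - alpha) / (2 * (1 + alpha)) *
                      (phi N alpha * (tot hP - tot hO) + (hP n - hO n))))).
Proof.
have hO_le_hP : tot hO <= tot hP := le_trans hpeak2 hpeak1.
split=> [cond_DP | cond_HP alpha alpha_range].
- split=> [alpha alpha_range | lP lO].
  + exact: nash_DP_iff.
  + exact: nash_DP0_balanced.
- split; first exact: phi_ge0_le1.
  exact: nash_HP_iff.
Qed.
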